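(* Let $\xi>0$ be such that $D^TD-\xi^2I$ is nonsingular. Then $\lambda\in\mathbb{C}$ is an eigenvalue of the operator $\mathcal{L}_{\xi}$ if and only if $-\bar{\lambda}$ is an eigenvalue of $\mathcal{L}_{\xi}$.
   Context: Let $n,m,n_u,n_y$ be positive integers, $A_0,\dots,A_m\in\mathbb{R}^{n\times n}$, $B\in\mathbb{R}^{n\times n_u}$, $C\in\mathbb{R}^{n_y\times n}$, $D\in\mathbb{R}^{n_y\times n_u}$, delays $\tau_1,\dots,\tau_m\geq0$, $\tau_{\max}=\max_i\tau_i$. For $\xi>0$ put $D_\xi=D^TD-\xi^2I_{n_u}$, $\tilde D_\xi=DD^T-\xi^2I_{n_y}$. Define $2n\times2n$ matrices $M_0=\begin{bmatrix} A_0-BD_\xi^{-1}D^TC & -BD_\xi^{-1}B^T\\ \xi^2 C^T\tilde D_\xi^{-1}C & -A_0^T+C^TDD_\xi^{-1}B^T\end{bmatrix}$, $M_i=\begin{bmatrix}A_i&0\\0&0\end{bmatrix}$, $M_{-i}=\begin{bmatrix}0&0\\0&-A_i^T\end{bmatrix}$, $1\le i\le m$. Let $X=\mathcal{C}([-\tau_{\max},\tau_{\max}],\mathbb{C}^{2n})$. The operator $\mathcal{L}_\xi$ on $X$ has domain $\{\phi\in X:\phi'\in X,\ \phi'(0)=M_0\phi(0)+\sum_{i=1}^m(M_i\phi(-\tau_i)+M_{-i}\phi(\tau_i))\}$ and $\mathcal{L}_\xi\phi=\phi'$. An eigenvalue is $\lambda\in\mathbb{C}$ such that $\mathcal{L}_\xi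 u=\lambda u$ for some nonzero $u$ in the domain. *)

From HB Require Import structures.
From mathcomp Require Import all_boot all_order all_algebra.
From mathcomp Require Import all_classical all_reals.
From mathcomp Require Import topology normedtype.
From mathcomp Require Import complex.
Set Implicit Arguments. Unset Strict Implicit. Unset Printing Implicit Defensive.
Import Order.TTheory GRing.Theory Num.Theory.
Import numFieldTopology.Exports numFieldNormedType.Exports.
Local Open Scope ring_scope.
Local Open Scope classical_set_scope.

(* Topology on the complex numbers R[i] (R : rcfType), copied from its canonical
   numField topology (R[i])^o, so that 'cV[R[i]]_k gets its product topology. *)
HB.instance Definition _ (R : rcfType) :=
  PseudoPointedMetric.copy (complex R) (complex R)^o.

Section Defs.
Variable R : realType.
Local Notation C := (complex R).

Definition Dxi (nu ny : nat) (D : 'M[R]_(ny, nu)) (xi : R) : 'M[R]_nu :=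
  D^T *m D - (xi ^+ 2)%:M.
Definition Dtilxi (nu ny : nat) (D : 'M[R]_(ny, nu)) (xi : R) : 'M[R]_ny :=
  D *m D^T - (xi ^+ 2)%:M.

Definition M0 (n nu ny : nat) (A0 : 'M[R]_n) (B : 'M[R]_(n, nu))
  (Cm : 'M[R]_(ny, n)) (D : 'M[R]_(ny, nu)) (xi : R) : 'M[R]_(n + n) :=
  let Di := invmx (Dxi D xi) in
  let Dti := invmx (Dtilxi D xi) in
  block_mx (A0 - B *m Di *m D^T *m Cm) (- (B *m Di *m B^T))
           ((xi ^+ 2) *: (Cm^T *m Dti *m Cm)) (- A0^T + Cm^T *m D *m Di *m B^T).

Definition Mpos (n : nat) (Ai : 'M[R]_n) : 'M[R]_(n + n) := block_mx Ai 0 0 0.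
Definition Mneg (n : nat) (Ai : 'M[R]_n) : 'M[R]_(n + n) := block_mx 0 0 0 (- Ai^T).

Definition cmx (p q : nat) (M : 'M[R]_(p, q)) : 'M[C]_(p, q) :=
  map_mx (fun x : R => x%:C%C) M.

(* tau_max = max_i tau_i (the tau_i are nonnegative) *)
Definition taumax (m : nat) (tau : 'I_m -> R) : R := \big[Num.max/0]_(i < m) tau i.

Definition has_deriv_on (V : normedModType C) (a b : R) (phi psi : R -> V) :=
  forall t, t \in `[a, b] ->
    (fun s : R => ((s - t)^-1)%:C%C *: (phi s - phi t))
      @ within [set s | s \in `[a, b]] (nbhs t^') --> psi t.

(* lambda is an eigenvalue of the operator L_xi on X = C([-tau_max,tau_max], C^{2n}):
   there is u in the domain (u continuous, u' exists and continuous, boundary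
   condition) with u' = lambda u and u nonzero in X. *)
Definition is_eigenvalue (n m nu ny : nat) (A0 : 'M[R]_n) (A : 'I_m -> 'M[R]_n)
  (B : 'M[R]_(n, nu)) (Cm : 'M[R]_(ny, n)) (D : 'M[R]_(ny, nu))
  (tau : 'I_m -> R) (xi : R) (lambda : C) : Prop :=
  let T := taumax tau in
  exists (u u' : R -> 'cV[C]_(n + n)),
    {within [set s | s \in `[- T, T]], continuous u} /\
    {within [set s | s \in `[- T, T]], continuous u'} /\
    has_deriv_on (- T) T u u' /\
    u' 0 = cmx (M0 A0 B Cm D xi) *m u 0
           + \sum_(i < m) (cmx (Mpos (A i)) *m u (- tau i)
                           + cmx (Mneg (A i)) *m u (tau i)) /\
    (forall t, t \in `[- T, T] -> u' t = lambda *: u t) /\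
    (exists t, t \in `[- T, T] /\ u t != 0).

End Defs.

From HB Require Import structures.
From mathcomp Require Import all_boot all_order all_algebra.
From mathcomp Require Import all_classical all_reals.
From mathcomp Require Import topology normedtype.
From mathcomp Require Import complex.
From mathcomp Require Import ring.
From mathcomp Require Import sequences derive realfun exp trigo.
Import Order.TTheory GRing.Theory Num.Theory.
Import numFieldTopology.Exports numFieldNormedType.Exports.
Local Open Scope ring_scope.
Local Open Scope classical_set_scope.

(* Every eigenfunction solves u' = lambda u on [-tau_max, tau_max], hence is
   t |-> e^(lambda t) v, and the boundary condition then says exactly that
   Delta(lambda) v = 0 for the characteristic matrix
     Delta(lambda) = lambda I - M_0
                     - sum_i (e^(-lambda tau_i) M_i + e^(lambda tau_i) M_(-i));
   so lambda is an eigenvalue iff det Delta(lambda) = 0.  With J = [0 I; -I 0],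
   M_0 is Hamiltonian (J^T M_0^T J = -M_0) and J^T M_i^T J = -M_(-i).  As all
   these matrices are real, J^T conj(Delta(lambda))^T J = -Delta(-conj lambda),
   whence det Delta(-conj lambda) = conj (det Delta(lambda)). *)

Section DifferenceQuotients.
Context {R : realType}.
Local Notation C := (complex R).
Local Notation Re := (@complex.Re R).
Local Notation Im := (@complex.Im R).

Lemma is_derive_cvg_diffqP (f : R -> R) (x l : R) :
  is_derive x 1 f l <-> (fun s => (s - x)^-1 * (f s - f x)) @ x^' --> l.
Proof.
rewrite is_derive1_caratheodory; split => [[g [fE gx <-]]|dfx].
  apply: cvg_trans ((continuous_withinNx _ _).1 gx); apply: near_eq_cvg.
  near=> s; rewrite fE mulrCA mulVf ?mulr1 // subr_eq0.
  by near: s; exact: nbhs_dnbhs_neq.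
exists (fun s => if s == x then l else (s - x)^-1 * (f s - f x)); split.
- move=> s; case: eqVneq => [->|sx]; first by rewrite !subrr mulr0.
  by rewrite mulrAC mulVf ?mul1r // subr_eq0.
- apply/continuous_withinNx; rewrite eqxx; apply: cvg_trans dfx.
  apply: near_eq_cvg; near=> s; rewrite ifN //.
  by near: s; exact: nbhs_dnbhs_neq.
- by rewrite eqxx.
Unshelve. all: by end_near. Qed.

Lemma normc_real (x : R) : `|x%:C%C| = `|x|%:C%C :> C.
Proof. by rewrite normc_def /= expr0n addr0 sqrtr_sqr. Qed.

Lemma continuous_real_complex : continuous (fun x : R => x%:C%C : C^o).
Proof.
move=> x; apply/(@cvgrPdist_lt _ C^o) => e e0.
have eE : e = (Re e)%:C%C by rewrite RRe_real // gtr0_real.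
near=> y; rewrite -rmorphB normc_real eE ltcR.
by near: y; apply: (@cvgr_dist_lt _ R^o _ _ _ id) => //; rewrite -ltcR -eE.
Unshelve. all: by end_near. Qed.

Lemma cvg_Re {T} {F : set_system T} {FF : Filter F} (f : T -> C^o) (l : C^o) :
  f @ F --> l -> (fun t => Re (f t)) @ F --> Re l.
Proof.
move=> fl; apply/(@cvgrPdist_lt _ R^o) => e e0.
near=> t; rewrite -raddfB -ltcR; apply: le_lt_trans (normc_ge_Re _) _.
by near: t; apply: (@cvgr_dist_lt _ C^o _ _ _ _ _ fl); rewrite ltcR.
Unshelve. all: by end_near. Qed.

Lemma cvg_Im {T} {F : set_system T} {FF : Filter F} (f : T -> C^o) (l : C^o) :
  f @ F --> l -> (fun t => Im (f t)) @ F --> Im l.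
Proof.
move=> fl; have ImE (z : C) : Im z = - Re (z * 'i%C) by rewrite ReiNIm opprK.
under eq_fun do rewrite ImE; rewrite ImE.
by apply: (@cvgN _ R^o); apply: cvg_Re; exact: (@cvgM C _ _ _ _ _ _ _ fl (cvg_cst _)).
Qed.

Lemma cvg_complex {T} {F : set_system T} {FF : Filter F} (f g : T -> R) (a b : R) :
  f @ F --> a -> g @ F --> b -> (fun t => (f t +i* g t)%C : C^o) @ F --> (a +i* b)%C.
Proof.
move=> fa gb; have cE (x y : R) : (x +i* y)%C = x%:C%C + 'i%C * y%:C%C.
  by rewrite [LHS]complexE.
under eq_fun do rewrite cE; rewrite cE.
apply: (@cvgD _ C^o); first exact: continuous_cvg (continuous_real_complex _) fa.
have gb' : (fun t => (g t)%:C%C : C^o) @ F --> (b%:C%C : C^o).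
  exact: continuous_cvg (continuous_real_complex b) gb.
exact: (@cvgM C _ _ _ _ _ _ _ (cvg_cst 'i%C) gb').
Qed.

(* The difference quotient of [has_deriv_on]; scalar functions are typed
   [R -> C^o] so that [C] is a normed [C]-module. *)
Definition diffq {V : lmodType C} (f : R -> V) (t s : R) : V :=
  ((s - t)^-1)%:C%C *: (f s - f t).

Lemma cvg_diffq_complex (f g : R -> R) (t f' g' : R) :
  is_derive t 1 f f' -> is_derive t 1 g g' ->
  diffq (fun s => (f s +i* g s)%C : C^o) t @ t^' --> (f' +i* g')%C.
Proof.
move=> df dg; have -> : diffq (fun s => (f s +i* g s)%C : C^o) t =
    fun s => (((s - t)^-1 * (f s - f t)) +i* ((s - t)^-1 * (g s - g t)))%C.
  by apply: funext => s; apply/eqP; rewrite eq_complex /= !mul0r subr0 addr0 !eqxx.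
by apply: cvg_complex; apply/is_derive_cvg_diffqP.
Qed.

Lemma diffq_continuous (f : R -> C^o) (t : R) (l : C^o) :
  diffq f t @ t^' --> l -> {for t, continuous f}.
Proof.
move=> dfl; apply/(continuous_withinNx f t).
have fE s : f t + (s - t)%:C%C * diffq f t s = f s.
  have [->|st] := eqVneq s t; first by rewrite subrr mul0r addr0.
  by rewrite /diffq mulrA -rmorphM mulfV ?subr_eq0 // mul1r addrC subrK.
have lin0 : (fun s => (s - t)%:C%C : C^o) @ t^' --> (0 : C^o).
  have : {for t, continuous ((fun x : R => x%:C%C : C^o) \o (fun s => s - t))}.
    apply: continuous_comp; last exact: continuous_real_complex.
    exact: (@cvgB _ R^o _ _ _ id (cst t) _ _ cvg_id (cvg_cst t)).
  by move/continuous_withinNx; rewrite /= subrr.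
have E : {near t^', (fun s => f t + (s - t)%:C%C * diffq f t s) =1 f}.
  exact: filterE.
apply: cvg_trans (near_eq_cvg E) _.
suff H : (fun s => f t + (s - t)%:C%C * diffq f t s) @ t^' --> f t + 0 * l.
  by rewrite mul0r addr0 in H.
apply: (@cvgD _ C^o); first exact: cvg_cst.
exact: (@cvgM C _ _ _ _ _ _ _ lin0 dfl).
Qed.

(* Instance search misses this filter when it only appears after unification,
   e.g. as a premise of a library lemma; it is then supplied by hand. *)
Lemma within_dnbhs_filter (I : set R) (t : R) : Filter (within I (nbhs t^')).
Proof. exact: _. Qed.

Lemma diffqM {F : set_system R} {FF : Filter F} {f g : R -> C^o} {t : R} {f' g' : C^o} :
  f @ F --> f t -> diffq f t @ F --> f' -> diffq g t @ F --> g' ->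
  diffq (fun s => f s * g s) t @ F --> f' * g t + f t * g'.
Proof.
move=> fc df dg.
have -> : diffq (fun s => f s * g s) t = fun s => diffq f t s * g t + f s * diffq g t s.
  by apply: funext => s; rewrite /diffq /GRing.scale /=; ring.
apply: (@cvgD _ C^o); first exact: (@cvgM C _ _ _ _ _ _ _ df (cvg_cst (g t))).
exact: (@cvgM C _ _ _ _ _ _ _ fc dg).
Qed.

Lemma cvg_dnbhs_itv_interior {T : topologicalType} {a b x : R} {g : R -> T} {y : T} :
  x \in `]a, b[%R -> g @ within [set s | s \in `[a, b]] (nbhs x^') --> y ->
  g @ x^' --> y.
Proof.
move=> xab; apply: cvg_trans; apply: cvg_fmap2 => P IP.
have Ix : x^' (fun s => s \in `]a, b[%R) := nbhs_dnbhs (near_in_itvoo xab).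
have IP' : x^' (fun s => s \in `[a, b] -> P s) := IP.
by apply: filterS2 IP' Ix => s IPs /subset_itv_oo_cc /mem_set; exact: IPs.
Qed.

Lemma has_deriv_on_entry {p q : nat} {a b : R} {u u' : R -> 'M[C]_(p, q)}
    (i : 'I_p) (j : 'I_q) :
  has_deriv_on a b u u' ->
  has_deriv_on a b (fun s => u s i j : C^o) (fun s => u' s i j).
Proof.
move=> du t tI.
have := @continuous_cvg _ _ _ _ _ _ (fun M : 'M[C]_(p, q) => M i j) _
  (@coord_continuous C _ _ i j (u' t)) (du t tI).
move=> H; apply: cvg_trans _ (H (within_dnbhs_filter _ _)).
by apply: near_eq_cvg; apply: filterE => s; rewrite /= !mxE.
Qed.

End DifferenceQuotients.

Section ComplexExponential.
Context {R : realType}.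
Local Notation C := (complex R).
Local Notation Re := (@complex.Re R).
Local Notation Im := (@complex.Im R).

Definition cexp (z : C) (t : R) : C :=
  ((expR (Re z * t) * cos (Im z * t)) +i* (expR (Re z * t) * sin (Im z * t)))%C.

Lemma cexp0 z : cexp z 0 = 1.
Proof. by rewrite /cexp !mulr0 expR0 cos0 sin0 mulr1 mulr0. Qed.

Lemma cexpN_mul z t : cexp (- z) t * cexp z t = 1.
Proof.
case: z => x y; rewrite /cexp /= !mulNr expRN cosN sinN.
have ex0 : expR (x * t) != 0 by rewrite gt_eqF ?expR_gt0.
apply/eqP; rewrite eq_complex /=; apply/andP; split; apply/eqP.
- by rewrite -(cos2Dsin2 (y * t)); field.
- by field.
Qed.

Lemma cexpJ z t : (cexp z t)^*%C = cexp (- z^*%C) (- t).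
Proof.
case: z => x y; rewrite /cexp /= opprK mulrNN mulrN cosN sinN.
by apply/eqP; rewrite eq_complex /= mulrN !eqxx.
Qed.

Lemma diffq_cexp z t : diffq (cexp z : R -> C^o) t @ t^' --> z * cexp z t.
Proof.
case: z => a b.
have dlin (c : R) : is_derive t 1 (fun s => c * s) c.
  by have := is_deriveZ c (is_derive_id t 1); rewrite [_%:A]mulr1.
have dexp : is_derive t 1 (fun s => expR (a * s)) (expR (a * t) * a).
  exact: is_derive1_comp (is_derive_expR _) (dlin _).
have dcos : is_derive t 1 (fun s => cos (b * s)) (- sin (b * t) * b).
  exact: is_derive1_comp (is_derive_cos _) (dlin _).
have dsin : is_derive t 1 (fun s => sin (b * s)) (cos (b * t) * b).
  exact: is_derive1_comp (is_derive_sin _) (dlin _).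
have dRe : is_derive t (1 : R) (fun s : R => expR (a * s) * cos (b * s))
    (a * (expR (a * t) * cos (b * t)) - b * (expR (a * t) * sin (b * t))).
  move: (is_deriveM dexp dcos) => H; apply: (is_derive_eq H).
  by rewrite /GRing.scale /=; ring.
have dIm : is_derive t (1 : R) (fun s : R => expR (a * s) * sin (b * s))
    (a * (expR (a * t) * sin (b * t)) + b * (expR (a * t) * cos (b * t))).
  move: (is_deriveM dexp dsin) => H; apply: (is_derive_eq H).
  by rewrite /GRing.scale /=; ring.
exact: cvg_diffq_complex dRe dIm.
Qed.

Lemma continuous_cexp z : continuous (cexp z : R -> C^o).
Proof. by move=> t; apply: diffq_continuous (diffq_cexp z t). Qed.

End ComplexExponential.

Section LinearODE.
Context {R : realType}.
Local Notation C := (complex R).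

Lemma is_derive_0_itv_cst {g : R -> R} {a b : R} :
  {within `[a, b], continuous g} -> (forall x, x \in `]a, b[%R -> is_derive x 1 g 0) ->
  forall t, t \in `[a, b]%R -> g t = g a.
Proof.
move=> gc dg t; rewrite in_itv /= => /andP[aLt tLb].
have der x : x \in `]a, t[%R -> is_derive x 1 g 0.
  rewrite in_itv /= => /andP[ax xt]; apply: dg.
  by rewrite in_itv /= ax (lt_le_trans xt tLb).
have cont : {within `[a, t], continuous g}.
  apply: continuous_subspaceW gc => x /=; rewrite !in_itv /= => /andP[-> xt].
  exact: le_trans xt tLb.
have [c _] := MVT_segment aLt der cont.
by rewrite mul0r => /eqP; rewrite subr_eq0 => /eqP.
Qed.

Lemma has_deriv_on_0_cst {f : R -> C^o} {a b : R} :
  {within [set s | s \in `[a, b]], continuous f} -> has_deriv_on a b f (fun=> 0) ->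
  forall t, t \in `[a, b] -> f t = f a.
Proof.
move=> fc df.
suff component_cst (p : C^o -> R) : continuous p ->
    (forall (r : R) z, p (r%:C%C * z) = r * p z) ->
    (forall z w, p (z - w) = p z - p w) ->
    forall t, t \in `[a, b] -> p (f t) = p (f a).
  move=> t tI; apply/eqP; rewrite eq_complex; apply/andP; split; apply/eqP.
    apply: component_cst => // [z|r [x y]|[x y] [x' y']] /=; last by [].
      exact: (@cvg_Re _ _ _ (nbhs_filter z) id z cvg_id).
    by rewrite mul0r subr0.
  apply: component_cst => // [z|r [x y]|[x y] [x' y']] /=; last by [].
    exact: (@cvg_Im _ _ _ (nbhs_filter z) id z cvg_id).
  by rewrite mul0r addr0.
move=> pc pZ pB t /set_mem tI; rewrite set_mem_set in fc.
have p0 : p 0 = 0 by rewrite -(subrr 0) pB subrr.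
have gc : {within `[a, b], continuous (p \o f)}.
  by move=> x; apply: continuous_comp (fc x) (pc _).
suff dg x : x \in `]a, b[%R -> is_derive x 1 (p \o f) 0.
  exact: (is_derive_0_itv_cst gc dg t tI).
move=> xab; apply/is_derive_cvg_diffqP.
have xI : x \in `[a, b] by apply/mem_set/subset_itv_oo_cc.
have := @continuous_cvg _ _ _ _ (dnbhs_filter x) _ p _ (pc 0)
  (cvg_dnbhs_itv_interior xab (df x xI)).
rewrite p0 => H; apply: cvg_trans _ H; apply: near_eq_cvg; apply: filterE => s.
by rewrite /= /diffq pZ pB.
Qed.

Lemma continuous_cexpZ (V : normedModType C) (l : C) (y : V) :
  continuous (fun t => cexp l t *: y).
Proof. by move=> t; apply: cvgZ (continuous_cexp l t) (cvg_cst y). Qed.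

Lemma has_deriv_on_cexpZ (V : normedModType C) (l : C) (y : V) (a b : R) :
  has_deriv_on a b (fun t => cexp l t *: y) (fun t => cexp l t *: (l *: y)).
Proof.
move=> t _; rewrite scalerA mulrC.
(* [cvgZ] takes its scalars in [C], whose topology is a copy of that of [C^o]. *)
have dq : (fun s => diffq (cexp l : R -> C^o) t s : C) @
    within [set s | s \in `[a, b]] (nbhs t^') --> (l * cexp l t : C).
  exact: cvg_within_filter _ (diffq_cexp l t).
apply: cvg_trans _ (cvgZ dq (cvg_cst y)); apply: near_eq_cvg; apply: filterE => s.
by rewrite /diffq /= -scalerA scalerBl.
Qed.

Lemma linear_ode_solution (v v' : R -> C^o) (l : C) (a b : R) :
  0 \in `[a, b] -> {within [set s | s \in `[a, b]], continuous v} ->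
  has_deriv_on a b v v' -> (forall t, t \in `[a, b] -> v' t = l * v t) ->
  forall t, t \in `[a, b] -> v t = cexp l t * v 0.
Proof.
move=> I0 vc dv v'E.
pose G s : C^o := cexp (- l) s * v s.
have Gc : {within [set s | s \in `[a, b]], continuous G}.
  move=> x; apply: continuousM (vc x).
  exact: continuous_subspaceT (continuous_cexp (- l)) x.
have dG : has_deriv_on a b G (fun=> 0).
  move=> x xI; have ex := (continuous_withinNx _ _).1 (continuous_cexp (- l) x).
  have E : - l * cexp (- l) x * v x + cexp (- l) x * v' x = 0 by rewrite v'E //; ring.
  rewrite -E; exact: diffqM (cvg_within_filter _ ex)
    (cvg_within_filter _ (diffq_cexp (- l) x)) (dv x xI).
move=> t tI; have GE := has_deriv_on_0_cst Gc dG.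
have vE s : v s = cexp l s * G s.
  by rewrite /G mulrA [_ * cexp _ _]mulrC cexpN_mul mul1r.
by rewrite vE (GE t tI) -(GE 0 I0) /G cexp0 mul1r.
Qed.

Lemma linear_ode_solution_mx {p q : nat} {u u' : R -> 'M[C]_(p, q)} {l : C} {a b : R} :
  0 \in `[a, b] -> {within [set s | s \in `[a, b]], continuous u} ->
  has_deriv_on a b u u' -> (forall t, t \in `[a, b] -> u' t = l *: u t) ->
  forall t, t \in `[a, b] -> u t = cexp l t *: u 0.
Proof.
move=> I0 uc du u'E t tI; apply/matrixP => i j; rewrite mxE.
have duij := has_deriv_on_entry i j du.
apply: (linear_ode_solution _ (fun s => u' s i j) l a b I0 _ duij) t tI.
  by move=> x; exact: (continuous_comp (uc x) (@coord_continuous C _ _ i j (u x))).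
by move=> s sI; rewrite u'E // mxE.
Qed.

End LinearODE.

Section SymplecticAdjoint.
Context {K : comNzRingType} {n : nat}.

Definition sympJ : 'M[K]_(n + n) := block_mx 0 1%:M (- 1%:M) 0.

(* [M] is Hamiltonian iff [symp_adj M = - M]. *)
Definition symp_adj (M : 'M[K]_(n + n)) : 'M[K]_(n + n) := sympJ^T *m M^T *m sympJ.

Lemma symp_adj_is_linear : linear symp_adj.
Proof.
by move=> c M N; rewrite /symp_adj linearP /= mulmxDr mulmxDl -scalemxAr -scalemxAl.
Qed.

HB.instance Definition _ :=
  GRing.isLinear.Build K 'M[K]_(n + n) 'M[K]_(n + n) _ symp_adj symp_adj_is_linear.

Lemma symp_adj_block (X Y Z W : 'M[K]_n) :
  symp_adj (block_mx X Y Z W) = block_mx W^T (- Y^T) (- Z^T) X^T.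
Proof.
rewrite /symp_adj /sympJ !tr_block_mx !mulmx_block !linearN /= !trmx0 !trmx1.
by rewrite !(mulNmx, mulmxN, mul1mx, mulmx1, mul0mx, mulmx0, add0r, addr0, opprK, oppr0).
Qed.

Lemma symp_adj_scalar (a : K) : symp_adj a%:M = a%:M.
Proof.
by rewrite (scalar_mx_block n n) symp_adj_block tr_scalar_mx trmx0 oppr0.
Qed.

Lemma det_symp_adj (M : 'M[K]_(n + n)) : \det (symp_adj M) = \det M.
Proof.
have JTJ : sympJ^T *m sympJ = 1%:M.
  by rewrite -[RHS](symp_adj_scalar 1) /symp_adj trmx1 mulmx1.
by rewrite /symp_adj !det_mulmx [\det M^T]det_tr mulrAC -det_mulmx JTJ det1 mul1r.
Qed.

End SymplecticAdjoint.

Lemma map_sympJ (K K' : comNzRingType) (f : {rmorphism K -> K'}) n :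
  map_mx f (sympJ : 'M[K]_(n + n)) = sympJ.
Proof. by rewrite /sympJ map_block_mx !map_mx0 map_mxN map_scalar_mx rmorph1. Qed.

Lemma map_symp_adj (K K' : comNzRingType) (f : {rmorphism K -> K'}) n
    (M : 'M[K]_(n + n)) :
  map_mx f (symp_adj M) = symp_adj (map_mx f M).
Proof. by rewrite /symp_adj !map_mxM -!map_trmx !map_sympJ. Qed.

Lemma det0_colP (F : fieldType) k (M : 'M[F]_k) :
  reflect (exists2 y : 'cV_k, y != 0 & M *m y = 0) (\det M == 0).
Proof.
rewrite -det_tr; apply: (iffP det0P) => [[v v0 vM]|[y y0 My]].
  by exists v^T; [rewrite trmx_eq0 | rewrite -[M]trmxK -trmx_mul vM trmx0].
by exists y^T; [rewrite trmx_eq0 | rewrite -trmx_mul My trmx0].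
Qed.

Section HamiltonianStructure.
Context {R : realType} {n nu ny : nat}.

Lemma symp_adj_Mpos (Ai : 'M[R]_n) : symp_adj (Mpos Ai) = - Mneg Ai.
Proof. by rewrite /Mpos /Mneg symp_adj_block opp_block_mx !trmx0 !oppr0 opprK. Qed.

Lemma symp_adj_Mneg (Ai : 'M[R]_n) : symp_adj (Mneg Ai) = - Mpos Ai.
Proof.
by rewrite /Mpos /Mneg symp_adj_block opp_block_mx !trmx0 !oppr0 linearN /= trmxK.
Qed.

Lemma tr_invmx_Dxi (D : 'M[R]_(ny, nu)) xi : (invmx (Dxi D xi))^T = invmx (Dxi D xi).
Proof. by rewrite trmx_inv /Dxi linearB /= tr_scalar_mx trmx_mul trmxK. Qed.

Lemma tr_invmx_Dtilxi (D : 'M[R]_(ny, nu)) xi :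
  (invmx (Dtilxi D xi))^T = invmx (Dtilxi D xi).
Proof. by rewrite trmx_inv /Dtilxi linearB /= tr_scalar_mx trmx_mul trmxK. Qed.

Lemma symp_adj_M0 (A0 : 'M[R]_n) (B : 'M[R]_(n, nu)) (Cm : 'M[R]_(ny, n)) D xi :
  symp_adj (M0 A0 B Cm D xi) = - M0 A0 B Cm D xi.
Proof.
rewrite /M0 symp_adj_block opp_block_mx; congr block_mx.
- rewrite linearD /= linearN /= trmxK !trmx_mul !trmxK tr_invmx_Dxi.
  by rewrite opprB addrC !mulmxA.
- by rewrite linearN /= !trmx_mul trmxK tr_invmx_Dxi mulmxA.
- by rewrite linearZ /= !trmx_mul trmxK tr_invmx_Dtilxi mulmxA.
- by rewrite linearB /= !trmx_mul trmxK tr_invmx_Dxi opprD opprK !mulmxA addrC.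
Qed.

End HamiltonianStructure.

Section CharacteristicMatrix.
Context {R : realType} {n m nu ny : nat}.
Variables (A0 : 'M[R]_n) (A : 'I_m -> 'M[R]_n) (B : 'M[R]_(n, nu))
  (Cm : 'M[R]_(ny, n)) (D : 'M[R]_(ny, nu)) (tau : 'I_m -> R) (xi : R).
Local Notation C := (complex R).

Definition charmx (l : C) : 'M[C]_(n + n) :=
  l%:M - cmx (M0 A0 B Cm D xi)
  - \sum_(i < m)
      (cexp l (- tau i) *: cmx (Mpos (A i)) + cexp l (tau i) *: cmx (Mneg (A i))).

Lemma charmx_mulmx (l : C) (y : 'cV[C]_(n + n)) :
  charmx l *m y = l *: y - (cmx (M0 A0 B Cm D xi) *m y
    + \sum_(i < m) (cmx (Mpos (A i)) *m (cexp l (- tau i) *: y)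
                   + cmx (Mneg (A i)) *m (cexp l (tau i) *: y))).
Proof.
rewrite /charmx !mulmxBl mul_scalar_mx mulmx_suml opprD addrA; congr (_ - _).
by apply: eq_bigr => i _; rewrite mulmxDl -!scalemxAl -!scalemxAr.
Qed.

Lemma symp_adj_conj_charmx (l : C) :
  symp_adj (map_mx conjc (charmx l)) = - charmx (- l^*%C).
Proof.
have cmxJ p q (M : 'M[R]_(p, q)) : map_mx conjc (cmx M) = cmx M.
  by apply/matrixP => i j; rewrite !mxE conjc_real.
have cmxN p q (M : 'M[R]_(p, q)) : cmx (- M) = - cmx M by rewrite /cmx map_mxN.
have conjZ c (M : 'M[C]_(n + n)) : map_mx conjc (c *: M) = c^*%C *: map_mx conjc M.
  exact: map_mxZ.
have symp_adj_cmx (M : 'M[R]_(n + n)) : symp_adj (cmx M) = cmx (symp_adj M).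
  by rewrite /cmx map_symp_adj.
rewrite /charmx.
rewrite !map_mxB map_scalar_mx cmxJ map_mx_sum !linearB /= symp_adj_scalar.
rewrite symp_adj_cmx symp_adj_M0 linear_sum /=.
under eq_bigr do rewrite map_mxD !conjZ !cexpJ opprK !cmxJ linearD !linearZ /=
  !symp_adj_cmx
  symp_adj_Mpos symp_adj_Mneg !cmxN.
have scalarN (c : C) : (- c)%:M = - c%:M :> 'M[C]_(n + n).
  by apply/matrixP => i j; rewrite !mxE mulNrn.
rewrite cmxN scalarN !opprK; congr (_ + _).
rewrite -sumrN; apply: eq_bigr => i _.
by rewrite !scalerN opprD !opprK addrC.
Qed.

Lemma det_charmxNJ (l : C) : \det (charmx (- l^*%C)) = (\det (charmx l))^*%C.
Proof.
rewrite -[charmx _]opprK -symp_adj_conj_charmx -scaleN1r detZ det_symp_adj.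
have sign2n : (-1) ^+ (n + n) = 1 :> C by rewrite -signr_odd addnn odd_double.
by rewrite det_map_mx sign2n mul1r.
Qed.

End CharacteristicMatrix.

Section Eigenvalues.
Context {R : realType} {n m nu ny : nat}.
Variables (A0 : 'M[R]_n) (A : 'I_m -> 'M[R]_n) (B : 'M[R]_(n, nu))
  (Cm : 'M[R]_(ny, n)) (D : 'M[R]_(ny, nu)) (tau : 'I_m -> R) (xi : R).
Hypothesis tau_ge0 : forall i, 0 <= tau i.
Local Notation C := (complex R).
Local Notation T := (taumax tau).
Local Notation charmx := (charmx A0 A B Cm D tau xi).

Lemma mem_itv_taumax (s : R) : `|s| <= T -> s \in `[- T, T].
Proof. by move=> sT; apply/mem_set; rewrite /= in_itv /= -ler_norml. Qed.

Lemma norm_tau_le i : `|tau i| <= T.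
Proof. by rewrite ger0_norm // le_bigmax. Qed.

Lemma zero_in_itv_taumax : (0 : R) \in `[- T, T].
Proof. by apply: mem_itv_taumax; rewrite normr0 bigmax_ge_id. Qed.

Lemma eigenvalue_det_charmx (l : C) :
  is_eigenvalue A0 A B Cm D tau xi l -> \det (charmx l) = 0.
Proof.
move=> [u [u' [uc [_ [du [bc [u'E [t0 [t0I ut0]]]]]]]]].
have uE := linear_ode_solution_mx zero_in_itv_taumax uc du u'E.
apply/eqP/det0_colP; exists (u 0).
  by apply: contraNneq ut0 => u00; rewrite uE // u00 scaler0.
rewrite charmx_mulmx -(u'E 0 zero_in_itv_taumax) bc.
apply/eqP; rewrite subr_eq0; apply/eqP.
congr (_ + _); apply: eq_bigr => i _.
have tauI : tau i \in `[- T, T] by apply: mem_itv_taumax; exact: norm_tau_le.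
have NtauI : - tau i \in `[- T, T] by apply: mem_itv_taumax; rewrite normrN norm_tau_le.
by rewrite (uE _ tauI) (uE _ NtauI).
Qed.

Lemma det_charmx_eigenvalue (l : C) :
  \det (charmx l) = 0 -> is_eigenvalue A0 A B Cm D tau xi l.
Proof.
move/eqP/det0_colP => [y y0 Py].
exists (fun t => cexp l t *: y), (fun t => cexp l t *: (l *: y)).
split; first exact/continuous_subspaceT/continuous_cexpZ.
split; first exact/continuous_subspaceT/continuous_cexpZ.
split; first exact: has_deriv_on_cexpZ.
split.
  by move: Py; rewrite charmx_mulmx cexp0 !scale1r => /eqP; rewrite subr_eq0 => /eqP.
split; first by move=> t _; rewrite scalerA mulrC -scalerA.
exists 0; split; first exact: zero_in_itv_taumax.
by rewrite cexp0 scale1r.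
Qed.

Lemma is_eigenvalueP (l : C) :
  reflect (is_eigenvalue A0 A B Cm D tau xi l) (\det (charmx l) == 0).
Proof.
by apply: (iffP eqP); [exact: det_charmx_eigenvalue | exact: eigenvalue_det_charmx].
Qed.

End Eigenvalues.

Theorem proposition1 (R : realType) (n m nu ny : nat)
  (A0 : 'M[R]_n) (A : 'I_m -> 'M[R]_n) (B : 'M[R]_(n, nu))
  (Cm : 'M[R]_(ny, n)) (D : 'M[R]_(ny, nu)) (tau : 'I_m -> R) (xi : R) :
  (0 < n)%N -> (0 < m)%N -> (0 < nu)%N -> (0 < ny)%N ->
  (forall i, 0 <= tau i) ->
  0 < xi ->
  Dxi D xi \in unitmx ->
  forall lambda : complex R,
    is_eigenvalue A0 A B Cm D tau xi lambda <->
    is_eigenvalue A0 A B Cm D tau xi (- (conjc lambda)).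
Proof.
move=> _ _ _ _ tau_ge0 _ _ l; have eigP := is_eigenvalueP A0 A B Cm D tau xi tau_ge0.
split=> /eigP det0; apply/eigP.
  by rewrite det_charmxNJ conjc_eq0.
by rewrite -conjc_eq0 -det_charmxNJ.
Qed.
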